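(* Let $\boldsymbol{P}$ be a feasible policy (as defined in the context). If the graph $\mathcal{G}_{\boldsymbol{P}}$ of $\boldsymbol{P}$ is connected, then the graph $\mathcal{G}_{\boldsymbol{Y}}$ of $\boldsymbol{Y}_{\boldsymbol{P}}$ is also connected.
   Context: For an $n\times n$ matrix $\boldsymbol{A}=[a_{i,m}]$, its graph $\mathcal{G}_{\boldsymbol{A}}$ has vertex set $\{1,\dots,n\}$ and an edge from $m$ to $i$ iff $a_{i,m}\ne0$; it is connected if there is a path between every pair of vertices. Setting: $M\ge2$ worker nodes, undirected graph with neighborhood indicators $d_{i,m}\in\{0,1\}$. $\boldsymbol{P}=[p_{i,m}]_{M\times M}$ has rows that are probability distributions; $t_{i,m}>0$ are iteration times; $\alpha>0$, $\rho>0$. Define $\overline{t}_i=\sum_m t_{i,m}p_{i,m}d_{i,m}$, $p_i=\frac{1/\overline{t}_i}{\sum_m 1/\overline{t}_m}$, $\gamma_{i,m}=\frac{d_{i,m}+d_{m,i}}{2p_{i,m}}$ (terms with $p_{i,m}=0$ taken as $0$). $\boldsymbol{Y}_{\boldsymbol{P}}=[y_{i,m}]$ with $y_{i,i}=1-2\alpha\rho\sum_{m\ne i}p_ip_{i,m}\gamma_{i,m}+\alpha^2\rho^2\sum_{m\ne i}(p_ip_{i,m}\gamma_{i,m}^2+p_mp_{m,i}\gamma_{m,i}^2)$ and, for $m\ne i$, $y_{i,m}=\alpha\rho(p_ip_{i,m}\gamma_{i,m}+p_mp_{m,i}\gamma_{m,i})-\alpha^2\rho^2(p_ip_{i,m}\gamma_{i,m}^2+p_mp_{m,i}\gamma_{m,i}^2)$.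 $\boldsymbol{P}$ is feasible if: there is $\overline{t}$ with $\overline{t}=\frac1M\sum_m t_{i,m}p_{i,m}d_{i,m}$ for all $i$; $p_{i,m}>\alpha\rho(d_{i,m}+d_{m,i})$ for all $i\ne m$ with $d_{i,m}\ne0$; $p_{i,m}=0$ whenever $d_{i,m}=0$; and $\sum_m p_{i,m}=1$ for all $i$. *)

From HB Require Import structures.
From mathcomp Require Import all_boot all_order all_algebra.
Set Implicit Arguments. Unset Strict Implicit. Unset Printing Implicit Defensive.
Import Order.TTheory GRing.Theory Num.Theory.
Local Open Scope ring_scope.

Section Defs.
Variables (R : realFieldType) (M : nat).

Definition mx_edge (A : 'M[R]_M) : rel 'I_M := fun m i => A i m != 0.
Definition mx_connected (A : 'M[R]_M) : Prop :=
  forall i j : 'I_M, connect (mx_edge A) i j.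

(* d : neighbourhood indicators (bool, cast to 0/1 in R) *)
Definition dR (d : 'I_M -> 'I_M -> bool) (i m : 'I_M) : R := (d i m)%:R.

Definition tbar (P : 'M[R]_M) (t : 'I_M -> 'I_M -> R) d (i : 'I_M) : R :=
  \sum_(m < M) t i m * P i m * dR d i m.

Definition pw (P : 'M[R]_M) t d (i : 'I_M) : R :=
  (tbar P t d i)^-1 / \sum_(m < M) (tbar P t d m)^-1.

(* gamma_{i,m}, taken as 0 when p_{i,m} = 0 *)
Definition gam (P : 'M[R]_M) d (i m : 'I_M) : R :=
  if P i m == 0 then 0 else (dR d i m + dR d m i) / (2 * P i m).

Definition Ymx (P : 'M[R]_M) t d (alpha rho : R) : 'M[R]_M :=
  \matrix_(i, m)
    if i == m then
      1 - 2 * alpha * rho *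
            \sum_(k < M | k != i) pw P t d i * P i k * gam P d i k
        + alpha ^+ 2 * rho ^+ 2 *
            \sum_(k < M | k != i) (pw P t d i * P i k * (gam P d i k) ^+ 2
                                   + pw P t d k * P k i * (gam P d k i) ^+ 2)
    else
      alpha * rho * (pw P t d i * P i m * gam P d i m
                     + pw P t d m * P m i * gam P d m i)
      - alpha ^+ 2 * rho ^+ 2 * (pw P t d i * P i m * (gam P d i m) ^+ 2
                                 + pw P t d m * P m i * (gam P d m i) ^+ 2).

Definition feasible (P : 'M[R]_M) t d (alpha rho : R) : Prop :=
  [/\ exists tb : R, forall i : 'I_M,
        tb = M%:R^-1 * \sum_(m < M) t i m * P i m * dR d i m,
      forall i m : 'I_M, i != m -> d i m ->
        alpha * rho * (dR d i m + dR d m i) < P i m,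
      forall i m : 'I_M, ~~ d i m -> P i m = 0
    & forall i : 'I_M, \sum_(m < M) P i m = 1].

End Defs.

From HB Require Import structures.
From mathcomp Require Import all_boot all_order all_algebra.
From mathcomp Require Import ring.
Set Implicit Arguments. Unset Strict Implicit. Unset Printing Implicit Defensive.
Import Order.TTheory GRing.Theory Num.Theory.
Local Open Scope ring_scope.

(* For i <> m the entry y_{i,m} factors as
     alpha rho (p_i p_{i,m} gamma_{i,m} (1 - alpha rho gamma_{i,m})
                + p_m p_{m,i} gamma_{m,i} (1 - alpha rho gamma_{m,i})),
   and feasibility gives gamma_{i,m} = 1/p_{i,m} with 2 alpha rho < p_{i,m}
   whenever p_{i,m} > 0.  Hence both terms are nonnegative, and the one with
   p_{i,m} > 0 is positive since the weights p_i are. *)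

Lemma mx_connected_sub (R : realFieldType) (M : nat) (A B : 'M[R]_M) :
  (forall i m, i != m -> A i m != 0 -> B i m != 0) ->
  mx_connected A -> mx_connected B.
Proof.
move=> AsubB connA i j; apply: connect_sub (connA i j) => m k Akm.
have [-> | mk] := eqVneq m k; first exact: connect0.
by apply: connect1; rewrite /mx_edge AsubB // eq_sym.
Qed.

Lemma Ymx_offdiagE (R : realFieldType) (M : nat) (P : 'M[R]_M) t d
    (alpha rho : R) (i m : 'I_M) :
  i != m ->
  Ymx P t d alpha rho i m =
    alpha * rho *
      (pw P t d i * P i m * gam P d i m * (1 - alpha * rho * gam P d i m)
       + pw P t d m * P m i * gam P d m i * (1 - alpha * rho * gam P d m i)).
Proof. by move=> /negbTE im; rewrite mxE im; ring. Qed.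

Section FeasiblePolicy.
Variables (R : realFieldType) (M : nat) (d : 'I_M -> 'I_M -> bool).
Variables (P : 'M[R]_M) (t : 'I_M -> 'I_M -> R) (alpha rho : R).
Hypothesis d_sym : forall i m, d i m = d m i.
Hypothesis P_ge0 : forall i m, 0 <= P i m.
Hypothesis t_gt0 : forall i m, 0 < t i m.
Hypothesis alpha_rho_gt0 : 0 < alpha * rho.
Hypothesis P_gt_bound : forall i m, i != m -> d i m ->
  alpha * rho * (dR R d i m + dR R d m i) < P i m.
Hypothesis P_supp : forall i m, ~~ d i m -> P i m = 0.
Hypothesis P_row_sum : forall i, \sum_(m < M) P i m = 1.

Lemma d_of_P_neq0 i m : P i m != 0 -> d i m.
Proof. by apply: contraR => /P_supp ->. Qed.

Lemma P_gt0 i m : P i m != 0 -> 0 < P i m.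
Proof. by rewrite lt0r P_ge0 andbT. Qed.

Lemma tbar_gt0 i : 0 < tbar P t d i.
Proof.
have [m Pim | P_row0] := pickP (fun m => P i m != 0); last first.
  move: (P_row_sum i); rewrite big1 => [/eqP | m _].
    by rewrite eq_sym oner_eq0.
  by move/negbFE/eqP: (P_row0 m).
have term_ge0 k : 0 <= t i k * P i k * dR R d i k.
  by rewrite !mulr_ge0 ?ler0n // ltW.
rewrite /tbar (bigD1 m) //= ltr_pwDl ?sumr_ge0 //.
by rewrite /dR (d_of_P_neq0 Pim) mulr1 mulr_gt0 ?P_gt0.
Qed.

Lemma pw_gt0 i : 0 < pw P t d i.
Proof.
rewrite /pw divr_gt0 ?invr_gt0 ?tbar_gt0 // (bigD1 i) //=.
rewrite ltr_pwDl ?invr_gt0 ?tbar_gt0 //.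
by apply: sumr_ge0 => k _; rewrite invr_ge0 ltW ?tbar_gt0.
Qed.

Lemma gam_ge0 i m : 0 <= gam P d i m.
Proof.
by rewrite /gam; case: eqP => // _; rewrite divr_ge0 ?addr_ge0 ?ler0n ?mulr_ge0.
Qed.

(* Both indicators are 1 on the support of P, by symmetry of d. *)
Lemma gam_supp i m : P i m != 0 -> gam P d i m = (P i m)^-1.
Proof.
move=> Pim; have dim := d_of_P_neq0 Pim.
rewrite /gam (negbTE Pim) /dR dim -d_sym dim.
by rewrite /=; field.
Qed.

Lemma alpha_rho_gam_lt1 i m : i != m -> alpha * rho * gam P d i m < 1.
Proof.
move=> im; have [Pim0 | Pim] := eqVneq (P i m) 0.
  by rewrite /gam Pim0 eqxx mulr0 ltr01.
have dim := d_of_P_neq0 Pim.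
have := P_gt_bound im dim; rewrite /dR dim -d_sym dim /= => bound.
rewrite gam_supp // -/(_ / _) ltr_pdivrMr ?P_gt0 // mul1r.
by rewrite (lt_trans _ bound) // ltr_pMr // ltrDl ltr01.
Qed.

Lemma Ymx_term_ge0 i m : i != m ->
  0 <= pw P t d i * P i m * gam P d i m * (1 - alpha * rho * gam P d i m).
Proof.
move=> im; apply: mulr_ge0; last by rewrite subr_ge0 ltW ?alpha_rho_gam_lt1.
by rewrite mulr_ge0 ?gam_ge0 // mulr_ge0 ?P_ge0 // ltW ?pw_gt0.
Qed.

Lemma Ymx_term_gt0 i m : i != m -> P i m != 0 ->
  0 < pw P t d i * P i m * gam P d i m * (1 - alpha * rho * gam P d i m).
Proof.
move=> im Pim; have := alpha_rho_gam_lt1 im.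
rewrite gam_supp // -(mulrA _ (P i m)) mulfV // mulr1 => lt1.
by rewrite mulr_gt0 ?pw_gt0 // subr_gt0.
Qed.

Lemma Ymx_offdiag_gt0 i m : i != m -> P i m != 0 -> 0 < Ymx P t d alpha rho i m.
Proof.
move=> im Pim; rewrite Ymx_offdiagE // mulr_gt0 //.
by apply: ltr_pwDl; [exact: Ymx_term_gt0 | apply: Ymx_term_ge0; rewrite eq_sym].
Qed.

End FeasiblePolicy.

Theorem lemma3 (R : realFieldType) (M : nat) (hM : (2 <= M)%N)
    (d : 'I_M -> 'I_M -> bool) (P : 'M[R]_M) (t : 'I_M -> 'I_M -> R)
    (alpha rho : R)
    (hdsym : forall i m : 'I_M, d i m = d m i)
    (hP0 : forall i m : 'I_M, 0 <= P i m)
    (ht : forall i m : 'I_M, 0 < t i m)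
    (halpha : 0 < alpha) (hrho : 0 < rho)
    (hfeas : feasible P t d alpha rho) :
  mx_connected P -> mx_connected (Ymx P t d alpha rho).
Proof.
case: hfeas => _ P_gt_bound P_supp P_row_sum.
apply: mx_connected_sub => i m im Pim.
by rewrite lt0r_neq0 // Ymx_offdiag_gt0 ?mulr_gt0.
Qed.
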